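(* Let $K$ and $L$ be regular languages over a finite alphabet $A$ with syntactic monoids $M$ and $N$, where $|M|=m$ and $|N|=n$, and let $a\in A$. Then the syntactic monoid of the language $KaL=\{\,uav\mid u\in K,\ v\in L\,\}$ has at most $mn(2^{mn}-1)+1$ elements.
   Context: The syntactic congruence of $R\subseteq A^*$ is $u\sim_R v$ iff for all $p,q\in A^*$, $puq\in R\Leftrightarrow pvq\in R$; the syntactic monoid of $R$ is $A^*/{\sim_R}$. *)

From mathcomp Require Import all_boot.
Set Implicit Arguments. Unset Strict Implicit. Unset Printing Implicit Defensive.

Definition language (A : finType) := seq A -> Prop.

Definition regular (A : finType) (R : language A) : Prop :=
  exists (Q : finType) (q0 : Q) (delta : Q -> A -> Q) (F : pred Q),
    forall w, R w <-> foldl delta q0 w \in F.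

Definition syn_cong (A : finType) (R : language A) (u v : seq A) : Prop :=
  forall p q : seq A, R (p ++ u ++ q) <-> R (p ++ v ++ q).

(* The syntactic monoid A^*/~_R has exactly k elements: there is a surjection
   from A^* onto a k-element set whose fibres are exactly the ~_R classes. *)
Definition syn_monoid_card (A : finType) (R : language A) (k : nat) : Prop :=
  exists f : seq A -> 'I_k,
    (forall i : 'I_k, exists w, f w = i) /\
    (forall u v, f u = f v <-> syn_cong R u v).

Definition marked_concat (A : finType) (K : language A) (a : A) (L : language A)
  : language A :=
  fun w => exists u v, K u /\ L v /\ w = u ++ a :: v.

From mathcomp Require Import all_boot.
From Stdlib Require Import ClassicalDescription.
Set Implicit Arguments. Unset Strict Implicit.

(* Send a word w to its syntactic classes of w for K and for L together with
   the set of pairs (class of p, class of q) such that w = u a v with p u in K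
   and v q in L.  Whether p w q lies in KaL depends only on this data, because
   the mark a falls either in p, in q or in w.  Moreover all words whose set
   is full are syntactically equivalent (every context accepts them), so one
   class suffices for them: at most m n (2^(mn) - 1) + 1 classes remain. *)

Definition asbool (P : Prop) : bool :=
  if excluded_middle_informative P then true else false.

Lemma asboolP (P : Prop) : reflect P (asbool P).
Proof. by rewrite /asbool; case: excluded_middle_informative => H; constructor. Qed.

Section SyntacticCongruence.
Variables (A : finType) (R : language A).

Lemma syn_cong_sym u v : syn_cong R u v -> syn_cong R v u.
Proof. by move=> Suv p q; split => /Suv. Qed.

Lemma syn_cong_trans u v w : syn_cong R u v -> syn_cong R v w -> syn_cong R u w.
Proof. by move=> Suv Svw p q; rewrite Suv Svw. Qed.

Lemma syn_cong_catr u v w : syn_cong R u v -> R (u ++ w) <-> R (v ++ w).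
Proof. by move=> /(_ [::] w). Qed.

Lemma syn_cong_catl u v w : syn_cong R u v -> R (w ++ u) <-> R (w ++ v).
Proof. by move=> /(_ w [::]); rewrite !cats0. Qed.

Lemma syn_class_nonempty w : exists w', asbool (syn_cong R w' w).
Proof. by exists w; apply/asboolP. Qed.

Definition syn_repr (w : seq A) : seq A := xchoose (syn_class_nonempty w).

Lemma syn_repr_cong w : syn_cong R (syn_repr w) w.
Proof. exact/asboolP/(xchooseP (syn_class_nonempty w)). Qed.

Lemma syn_repr_eq u v : syn_cong R u v -> syn_repr u = syn_repr v.
Proof.
move=> Suv; apply: eq_xchoose => w; apply/asboolP/asboolP => Sw.
  exact: syn_cong_trans Sw Suv.
exact: syn_cong_trans Sw (syn_cong_sym Suv).
Qed.

Lemma syn_monoid_card_range (C : finType) (h : seq A -> C) :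
  (forall u v, h u = h v <-> syn_cong R u v) ->
  syn_monoid_card R #|[pred x | asbool (exists w, h w = x)]|.
Proof.
move=> hE; rewrite -card_sig.
pose T := {x : C | asbool (exists w, h w = x)}.
have h_in w : asbool (exists w', h w' = h w) by apply/asboolP; exists w.
exists (fun w => enum_rank (exist _ (h w) (h_in w) : T)); split.
  move=> i; case Ei: (enum_val i) => [x hx]; have /asboolP [w Ew] := hx; exists w.
  by rewrite -[i]enum_valK Ei; congr enum_rank; apply: val_inj.
move=> u v; rewrite -hE; split => [/enum_rank_inj [] //|Ehuv].
by congr enum_rank; apply: val_inj.
Qed.

Lemma syn_monoid_card_le (C : finType) (c : seq A -> C) :
  (forall u v, c u = c v -> syn_cong R u v) ->
  exists k, syn_monoid_card R k /\ k <= #|C|.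
Proof.
move=> c_cong; pose h w := c (syn_repr w).
have hE u v : h u = h v <-> syn_cong R u v.
  split => [/c_cong Suv|/syn_repr_eq Euv]; last by rewrite /h Euv.
  apply: syn_cong_trans (syn_cong_sym (syn_repr_cong u)) _.
  exact: syn_cong_trans Suv (syn_repr_cong v).
by eexists; split; [exact: syn_monoid_card_range hE | exact: max_card].
Qed.

End SyntacticCongruence.

Lemma cat_eq_cat_cons (T : Type) (a : T) p r x y : p ++ r = x ++ a :: y ->
  (exists p2, p = x ++ a :: p2 /\ y = p2 ++ r) \/
  (exists r1, r = r1 ++ a :: y /\ x = p ++ r1).
Proof.
elim: p x => [|b p IH] x /=; first by move=> ->; right; exists x.
case: x => [|c x] /= [-> E]; first by left; exists p.
by case: (IH _ E) => [[p2 [-> ->]]|[r1 [-> ->]]]; [left; exists p2 | right; exists r1].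
Qed.

Lemma marked_concat_catP (A : finType) (K L : language A) (a : A) p w q :
  marked_concat K a L (p ++ w ++ q) <->
  (exists p1 p2, [/\ p = p1 ++ a :: p2, K p1 & L (p2 ++ w ++ q)]) \/
  (exists q1 q2, [/\ q = q1 ++ a :: q2, K (p ++ w ++ q1) & L q2]) \/
  (exists u v, [/\ w = u ++ a :: v, K (p ++ u) & L (v ++ q)]).
Proof.
split.
- move=> [x [y [Kx [Ly E]]]].
  case: (cat_eq_cat_cons E) => [[p2 [Ep Ey]]|[r1 [Er Ex]]].
    by left; exists x, p2; subst.
  case: (cat_eq_cat_cons Er) => [[w2 [Ew Ey]]|[r2 [Eq Er1]]].
    by right; right; exists r1, w2; subst.
  by right; left; exists r2, y; subst.
- case=> [[p1 [p2 [-> K1 L2]]]|[[q1 [q2 [-> K1 L2]]]|[u [v [-> K1 L2]]]]].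
  + by exists p1, (p2 ++ w ++ q); do !split => //; rewrite -catA.
  + by exists (p ++ w ++ q1), q2; do !split => //; rewrite !catA.
  + by exists (p ++ u), (v ++ q); do !split => //; rewrite -!catA.
Qed.

Lemma card_set (T : finType) : #|{: {set T}}| = 2 ^ #|T|.
Proof. by have := card_powerset [set: T]; rewrite powersetT !cardsT. Qed.

Section MarkedConcatenation.
Variables (A : finType) (K L : language A) (a : A) (m n : nat).
Variables (fK : seq A -> 'I_m) (fL : seq A -> 'I_n).
Hypothesis fK_cong : forall u v, fK u = fK v <-> syn_cong K u v.
Hypothesis fL_cong : forall u v, fL u = fL v <-> syn_cong L u v.

Let KaL := marked_concat K a L.

Definition mark_profile (w : seq A) : {set 'I_m * 'I_n} :=
  [set xy | asbool (exists p q u v, [/\ fK p = xy.1, fL q = xy.2,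
                                       w = u ++ a :: v, K (p ++ u) & L (v ++ q)])].

Lemma mark_profileP w p q :
  (fK p, fL q) \in mark_profile w <->
  exists u v, [/\ w = u ++ a :: v, K (p ++ u) & L (v ++ q)].
Proof.
rewrite inE; split => [/asboolP [p' [q' [u [v [Ep Eq -> Ku Lv]]]]]|[u [v [-> Ku Lv]]]].
  exists u, v; split => //.
    exact: (syn_cong_catr u ((fK_cong p' p).1 Ep)).1 Ku.
  exact: (syn_cong_catl v ((fL_cong q' q).1 Eq)).1 Lv.
by apply/asboolP; exists p, q, u, v.
Qed.

Lemma mark_profile_full u : mark_profile u = setT -> forall p q, KaL (p ++ u ++ q).
Proof. by move=> Hu p q; apply/marked_concat_catP; right; right; apply/mark_profileP; rewrite Hu inE. Qed.

Lemma marked_concat_cong_imp u v :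
  syn_cong K u v -> syn_cong L u v -> mark_profile u = mark_profile v ->
  forall p q, KaL (p ++ u ++ q) -> KaL (p ++ v ++ q).
Proof.
move=> SK SL Euv p q /marked_concat_catP Hu; apply/marked_concat_catP.
case: Hu => [[p1 [p2 [E K1 L2]]]|[[q1 [q2 [E K1 L2]]]|Hu]].
- by left; exists p1, p2; split => //; apply/(SL p2 q).
- by right; left; exists q1, q2; split => //; apply/(SK p q1).
- by right; right; apply/mark_profileP; rewrite -Euv; apply/mark_profileP.
Qed.

Lemma marked_concat_cong u v :
  syn_cong K u v -> syn_cong L u v -> mark_profile u = mark_profile v ->
  syn_cong KaL u v.
Proof.
move=> SK SL Euv p q; split; first exact: marked_concat_cong_imp.
by apply: marked_concat_cong_imp; rewrite ?Euv //; apply: syn_cong_sym.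
Qed.

Definition mark_code (w : seq A) :
    option ('I_m * 'I_n * {S : {set 'I_m * 'I_n} | S != setT}) :=
  omap (fun S => (fK w, fL w, S)) (insub (mark_profile w)).

Lemma mark_code_cong u v : mark_code u = mark_code v -> syn_cong KaL u v.
Proof.
rewrite /mark_code.
case: insubP => [S _ ES|/negbNE/eqP Hu]; case: insubP => [S' _ ES'|/negbNE/eqP Hv] //=.
  case=> /fK_cong SK /fL_cong SL ES'S.
  by apply: marked_concat_cong => //; rewrite -ES -ES' ES'S.
by move=> _ p q; split=> _; apply: mark_profile_full.
Qed.

End MarkedConcatenation.

Lemma card_mark_code_type m n :
  #|{: option ('I_m * 'I_n * {S : {set 'I_m * 'I_n} | S != setT})}|
    = m * n * (2 ^ (m * n) - 1) + 1.
Proof.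
rewrite card_option !card_prod !card_ord card_sig.
rewrite (_ : #|[pred x | x != setT]| = #|predC1 [set: 'I_m * 'I_n]|) //.
by rewrite cardC1 card_set card_prod !card_ord subn1 addn1.
Qed.

Theorem proposition4 (A : finType) (K L : language A) (m n : nat) (a : A) :
  regular K -> regular L ->
  syn_monoid_card K m -> syn_monoid_card L n ->
  exists k : nat,
    syn_monoid_card (marked_concat K a L) k /\
    k <= m * n * (2 ^ (m * n) - 1) + 1.
Proof.
move=> _ _ [fK [_ fK_cong]] [fL [_ fL_cong]].
have [k [Hk k_le]] := syn_monoid_card_le (mark_code_cong (a:=a) fK_cong fL_cong).
by exists k; rewrite -card_mark_code_type.
Qed.
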